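(* There exists $\theta_0\in(0,\pi/4)$, depending only on $\alpha$, such that for every $\theta\in(0,\theta_0)$ there exists $a_0(\theta)\ge1$ such that for every $a>a_0(\theta)$ and every $b\in(0,1)$ we have $\mathcal R(t,b,\theta)\subset B(p,r_p)$ for all $p\in\mathcal P(a,b,\theta)$ and all $t\in[1,x_p]$.
   Context: $\mathbb H=\mathbb R^3$, $p=(x_p,y_p,z_p)$, group law $(x,y,z)\cdot(x',y',z')=(x+x',y+y',z+z'+\tfrac12(xy'-yx'))$, dilations $\delta_\lambda(x,y,z)=(\lambda x,\lambda y,\lambda^2z)$. Fix $\alpha>0$ such that $d_\alpha(p,q)=\inf\{r>0:\delta_{1/r}(p^{-1}\cdot q)\in B_\alpha\}$ is a distance, $B_\alpha$ the closed Euclidean ball of radius $\alpha$ at $0$. $B(p,r)=\{q:d_\alpha(q,p)\le r\}$, $r_p=d_\alpha(0,p)$. $\mathcal P(a,b,\theta)=\{p: x_p>a,\ |z_p|<b,\ |y_p|<x_p\tan\theta\}$ and $\mathcal R(t,b,\theta)=\{p: x_p=t,\ |z_p|<b,\ |y_p|<x_p\tan\theta\}$. *)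

From Stdlib Require Import Reals Lra ClassicalEpsilon.
Open Scope R_scope.

Definition pt := (R * R * R)%type.
Definition xc (p : pt) : R := fst (fst p).
Definition yc (p : pt) : R := snd (fst p).
Definition zc (p : pt) : R := snd p.

Definition hmul (p q : pt) : pt :=
  (xc p + xc q, yc p + yc q,
   zc p + zc q + / 2 * (xc p * yc q - yc p * xc q)).
Definition hinv (p : pt) : pt := (- xc p, - yc p, - zc p).
Definition dil (l : R) (p : pt) : pt := (l * xc p, l * yc p, l * l * zc p).
Definition origin : pt := (0, 0, 0).

Definition in_Balpha (alpha : R) (p : pt) : Prop :=
  xc p ^ 2 + yc p ^ 2 + zc p ^ 2 <= alpha ^ 2.

Definition is_glb (E : R -> Prop) (m : R) : Prop :=
  (forall x, E x -> m <= x) /\ (forall m', (forall x, E x -> m' <= x) -> m' <= m).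

(* infimum (chosen by classical choice; well defined whenever it exists) *)
Definition Rinf (E : R -> Prop) : R :=
  epsilon (inhabits 0) (fun m => is_glb E m).

Definition dalpha (alpha : R) (p q : pt) : R :=
  Rinf (fun r => 0 < r /\ in_Balpha alpha (dil (/ r) (hmul (hinv p) q))).

Definition is_distance (d : pt -> pt -> R) : Prop :=
  (forall p q, 0 <= d p q) /\
  (forall p q, d p q = 0 <-> p = q) /\
  (forall p q, d p q = d q p) /\
  (forall p q s, d p s <= d p q + d q s).

Definition ballB (alpha : R) (p : pt) (r : R) (q : pt) : Prop :=
  dalpha alpha q p <= r.

Definition rp (alpha : R) (p : pt) : R := dalpha alpha origin p.

Definition inP (a b th : R) (p : pt) : Prop :=
  xc p > a /\ Rabs (zc p) < b /\ Rabs (yc p) < xc p * tan th.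

Definition inRset (t b th : R) (p : pt) : Prop :=
  xc p = t /\ Rabs (zc p) < b /\ Rabs (yc p) < xc p * tan th.

(* Every radius r admissible for r_p = d(0,p) is admissible for d(q,p), which
   does not even use that d_alpha is a distance.  Left translation by q^-1
   lowers the horizontal part |x|^2 + |y|^2 of delta_{1/r}(p) by at least
   (2/3) t x_p / r^2, because the cone condition keeps the y-coordinates below
   x tan(theta).  The vertical part grows by at most
   (1 + t x_p tan theta)(3 + t x_p tan theta) / r^4, and admissibility of r for
   p gives 1/r <= alpha / x_p, so for tan(theta) small and x_p large this
   growth is dominated by the horizontal gain. *)
From Stdlib Require Import Reals Lra Psatz ClassicalEpsilon.
Open Scope R_scope.

Lemma glb_exists (E : R -> Prop) :
  (exists x, E x) -> (exists m, forall x, E x -> m <= x) -> exists m, is_glb E m.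
Proof.
  intros [x0 Hx0] [m0 Hm0].
  destruct (completeness (fun x => E (- x))) as [m [Hub Hleast]].
  - exists (- m0). intros x Hx. specialize (Hm0 _ Hx). lra.
  - exists (- x0). rewrite Ropp_involutive. exact Hx0.
  - exists (- m). split.
    + intros x Hx.
      assert (- x <= m) by (apply Hub; rewrite Ropp_involutive; exact Hx).
      lra.
    + intros m' Hm'.
      assert (m <= - m') by (apply Hleast; intros y Hy; specialize (Hm' _ Hy); lra).
      lra.
Qed.

Lemma Rinf_is_glb (E : R -> Prop) : (exists m, is_glb E m) -> is_glb E (Rinf E).
Proof. intros H. exact (epsilon_spec (inhabits 0) _ H). Qed.

Lemma Rinf_le_Rinf (E1 E2 : R -> Prop) :
  (forall r, E1 r -> E2 r) -> (exists r, E1 r) ->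
  (exists m, forall r, E2 r -> m <= r) -> Rinf E2 <= Rinf E1.
Proof.
  intros Hsub [r Hr] Hlow.
  assert (Hglb1 : is_glb E1 (Rinf E1)).
  { apply Rinf_is_glb, glb_exists; [now exists r |].
    destruct Hlow as [m Hm]. exists m. intros x Hx. apply Hm, Hsub, Hx. }
  assert (Hglb2 : is_glb E2 (Rinf E2)).
  { apply Rinf_is_glb, glb_exists; [exists r; apply Hsub, Hr | exact Hlow]. }
  apply (proj2 Hglb1). intros x Hx. apply (proj1 Hglb2), Hsub, Hx.
Qed.

Lemma in_Balpha_dil (alpha u : R) (w : pt) :
  in_Balpha alpha (dil u w) <->
  u ^ 2 * (xc w ^ 2 + yc w ^ 2) + u ^ 2 * u ^ 2 * zc w ^ 2 <= alpha ^ 2.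
Proof.
  unfold in_Balpha, dil, xc, yc, zc; simpl.
  split; intros H; lra.
Qed.

Lemma exists_dil_in_Balpha (alpha : R) (w : pt) :
  0 < alpha -> exists r, 0 < r /\ in_Balpha alpha (dil (/ r) w).
Proof.
  intros Ha.
  set (S := xc w ^ 2 + yc w ^ 2 + zc w ^ 2).
  assert (HS : 0 <= S) by (unfold S; nra).
  assert (Ha2 : 0 < alpha ^ 2) by nra.
  assert (HSa : 0 <= S / alpha ^ 2) by (apply Rmult_le_pos; [lra | left; apply Rinv_0_lt_compat; lra]).
  exists (1 + S / alpha ^ 2). split; [lra |].
  rewrite in_Balpha_dil.
  set (u := / (1 + S / alpha ^ 2)).
  assert (Hu0 : 0 < u) by (apply Rinv_0_lt_compat; lra).
  assert (HuS : u * S = alpha ^ 2 * (1 - u)) by (unfold u; field; lra).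
  assert (Hu1 : u <= 1) by nra.
  assert (Hz : u ^ 2 * u ^ 2 * zc w ^ 2 <= u ^ 2 * zc w ^ 2).
  { assert (u ^ 2 <= 1) by nra.
    assert (0 <= u ^ 2 * zc w ^ 2) by nra. nra. }
  assert (Hsq : u ^ 2 * S <= u * S).
  { assert (0 <= (1 - u) * (u * S)) by (apply Rmult_le_pos; nra). nra. }
  assert (u ^ 2 * S = u ^ 2 * (xc w ^ 2 + yc w ^ 2) + u ^ 2 * zc w ^ 2)
    by (unfold S; ring).
  assert (0 <= alpha ^ 2 * u) by nra.
  lra.
Qed.

Lemma dalpha_le_dalpha (alpha : R) (p q p' q' : pt) :
  0 < alpha ->
  (forall r, 0 < r -> in_Balpha alpha (dil (/ r) (hmul (hinv p) q)) ->
             in_Balpha alpha (dil (/ r) (hmul (hinv p') q'))) ->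
  dalpha alpha p' q' <= dalpha alpha p q.
Proof.
  intros Ha Hadm. unfold dalpha. apply Rinf_le_Rinf.
  - intros r [Hr HB]. split; [exact Hr | apply Hadm; assumption].
  - exact (exists_dil_in_Balpha alpha _ Ha).
  - exists 0. intros r [Hr _]. lra.
Qed.

Lemma hmul_hinv_origin (p : pt) : hmul (hinv origin) p = p.
Proof.
  destruct p as [[x y] z]. unfold hmul, hinv, origin, xc, yc, zc; simpl.
  f_equal; [f_equal |]; ring.
Qed.

Lemma Rabs_le_between (x a : R) : Rabs x <= a -> - a <= x <= a.
Proof.
  intros H. pose proof (Rle_abs x). pose proof (Rle_abs (- x)).
  rewrite Rabs_Ropp in *. lra.
Qed.

Lemma horizontal_gain (T t X yp yq : R) :
  0 <= T -> 3 * T <= 1 -> 0 <= t <= X ->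
  Rabs yp <= X * T -> Rabs yq <= t * T ->
  (X - t) ^ 2 + (yp - yq) ^ 2 <= X ^ 2 + yp ^ 2 - 2 / 3 * (t * X).
Proof.
  intros HT HT3 Ht Hyp Hyq.
  apply Rabs_le_between in Hyp, Hyq.
  assert (HTT : T * T <= 1 / 9) by nra.
  assert (t * t * (T * T) <= t * X * (1 / 9)) by nra.
  assert (- (yp * yq) <= t * X * (T * T)) by nra.
  assert (yq ^ 2 <= t * t * (T * T)) by nra.
  nra.
Qed.

Lemma sq_shift_le (z D c : R) :
  Rabs z <= 1 -> Rabs D <= c -> (z - D) ^ 2 - z ^ 2 <= c * (c + 2).
Proof.
  intros Hz HD. apply Rabs_le_between in Hz, HD. nra.
Qed.

Lemma vertical_shift_bound (T t X yp yq zq : R) :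
  0 <= T -> 0 <= t -> 0 <= X ->
  Rabs yp <= X * T -> Rabs yq <= t * T -> Rabs zq <= 1 ->
  Rabs (zq + / 2 * (t * yp - yq * X)) <= 1 + t * X * T.
Proof.
  intros HT Ht HX Hyp Hyq Hzq.
  apply Rabs_le_between in Hyp, Hyq, Hzq.
  apply Rabs_le. split; nra.
Qed.

Lemma vertical_budget (alpha T X s : R) :
  0 < alpha -> 0 <= T -> 2 * alpha * T <= 1 -> 1 <= X -> 10 * alpha <= X ->
  1 <= s <= X ^ 2 ->
  alpha ^ 2 * ((1 + s * T) * (1 + s * T + 2)) <= 2 / 3 * s * X ^ 2.
Proof.
  intros Ha HT HaT HX HXa Hs.
  assert (HaT0 : 0 <= alpha * T) by nra.
  assert (Hquad : alpha ^ 2 * (s * T) ^ 2 <= s * X ^ 2 / 4).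
  { assert (HaT2 : (alpha * T) ^ 2 <= 1 / 4) by nra.
    assert (Hs2 : s ^ 2 <= s * X ^ 2) by nra.
    replace (alpha ^ 2 * (s * T) ^ 2) with (s ^ 2 * (alpha * T) ^ 2) by ring.
    assert (s ^ 2 * (alpha * T) ^ 2 <= s ^ 2 * (1 / 4))
      by (apply Rmult_le_compat_l; nra).
    lra. }
  assert (Hlin : alpha ^ 2 * (4 * s * T) <= s * X ^ 2 / 5).
  { replace (alpha ^ 2 * (4 * s * T)) with (2 * alpha * s * (2 * alpha * T)) by ring.
    assert (2 * alpha * s * (2 * alpha * T) <= 2 * alpha * s)
      by (rewrite <- (Rmult_1_r (2 * alpha * s)) at 2; apply Rmult_le_compat_l; nra).
    assert (2 * alpha * s <= X * s / 5) by nra.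
    nra. }
  assert (Hconst : 3 * alpha ^ 2 <= s * X ^ 2 / 30) by nra.
  nra.
Qed.

Lemma dil_hinv_mul_in_Balpha (alpha T u : R) (p q : pt) :
  0 < alpha -> 0 <= T -> 3 * T <= 1 -> 2 * alpha * T <= 1 ->
  10 * alpha <= xc p -> 1 <= xc q <= xc p ->
  Rabs (yc p) <= xc p * T -> Rabs (yc q) <= xc q * T ->
  Rabs (zc p) <= 1 -> Rabs (zc q) <= 1 ->
  in_Balpha alpha (dil u p) -> in_Balpha alpha (dil u (hmul (hinv q) p)).
Proof.
  destruct p as [[X yp] zp], q as [[t yq] zq].
  unfold xc, yc, zc; simpl.
  intros Ha HT HT3 HaT HXa Ht Hyp Hyq Hzp Hzq.
  rewrite !in_Balpha_dil. unfold hmul, hinv, xc, yc, zc; simpl.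
  set (s := t * X).
  set (D := zq + / 2 * (t * yp - yq * X)).
  replace (- t + X) with (X - t) by ring.
  replace (- yq + yp) with (yp - yq) by ring.
  replace (- zq + zp + / 2 * (- t * yp - - yq * X)) with (zp - D) by (unfold D; ring).
  intros Hp.
  assert (Hs : 1 <= s <= X ^ 2) by (unfold s; split; nra).
  assert (Hhor := horizontal_gain T t X yp yq HT HT3 ltac:(lra) Hyp Hyq).
  assert (Hver := sq_shift_le zp D _ Hzp
                    (vertical_shift_bound T t X yp yq zq HT ltac:(lra) ltac:(lra) Hyp Hyq Hzq)).
  fold s in Hhor, Hver.
  set (K := (1 + s * T) * (1 + s * T + 2)) in Hver.
  assert (HuX : u ^ 2 * X ^ 2 <= alpha ^ 2).
  { assert (0 <= u ^ 2 * yp ^ 2) by nra.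
    assert (0 <= u ^ 2 * u ^ 2 * zp ^ 2) by nra. nra. }
  (* the horizontal gain pays for the vertical growth since 1/r <= alpha / x_p *)
  assert (HuK : u ^ 2 * K <= 2 / 3 * s).
  { assert (HX2 : 0 < X ^ 2) by nra.
    assert (HK := vertical_budget alpha T X s Ha HT HaT ltac:(lra) HXa Hs).
    apply (Rmult_le_reg_r (X ^ 2)); [exact HX2 |].
    fold K in HK.
    assert (0 <= K) by (unfold K; nra).
    assert (u ^ 2 * X ^ 2 * K <= alpha ^ 2 * K) by (apply Rmult_le_compat_r; lra).
    lra. }
  assert (Hu2 : 0 <= u ^ 2) by nra.
  assert (u ^ 2 * u ^ 2 * ((zp - D) ^ 2 - zp ^ 2) <= u ^ 2 * u ^ 2 * K)
    by (apply Rmult_le_compat_l; nra).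
  assert (u ^ 2 * u ^ 2 * K <= u ^ 2 * (2 / 3 * s)).
  { replace (u ^ 2 * u ^ 2 * K) with (u ^ 2 * (u ^ 2 * K)) by ring.
    apply Rmult_le_compat_l; lra. }
  assert (u ^ 2 * ((X - t) ^ 2 + (yp - yq) ^ 2)
          <= u ^ 2 * (X ^ 2 + yp ^ 2 - 2 / 3 * s))
    by (apply Rmult_le_compat_l; lra).
  lra.
Qed.

Theorem lemma4p3 (alpha : R) (Halpha : 0 < alpha)
  (Hdist : is_distance (dalpha alpha)) :
  exists th0 : R, 0 < th0 < PI / 4 /\
    forall th : R, 0 < th < th0 ->
      exists a0 : R, 1 <= a0 /\
        forall a b : R, a > a0 -> 0 < b < 1 ->
          forall p : pt, inP a b th p ->
            forall t : R, 1 <= t <= xc p ->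
              forall q : pt, inRset t b th q -> ballB alpha p (rp alpha p) q.
Proof.
  (* tan theta_0 = 1/(4(1+alpha)) gives 3 tan theta <= 1 and 2 alpha tan theta <= 1 *)
  set (c := / (4 * (1 + alpha))).
  assert (Hc0 : 0 < c) by (apply Rinv_0_lt_compat; lra).
  assert (Hc : c * (4 * (1 + alpha)) = 1) by (unfold c; field; lra).
  exists (atan c). split.
  { rewrite <- atan_0, <- atan_1. split; apply atan_increasing; nra. }
  intros th [Hth0 Hth].
  pose proof PI_RGT_0.
  pose proof (atan_bound c) as [_ Hatan].
  assert (HT : tan th < c) by (rewrite <- (tan_atan c); apply tan_increasing; lra).
  assert (HT0 : 0 < tan th) by (apply tan_gt_0; lra).
  exists (1 + 10 * alpha). split; [lra |].
  intros a b Ha Hb p [Hxp [Hzp Hyp]] t Ht q [Hxq [Hzq Hyq]].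
  unfold ballB, rp. apply dalpha_le_dalpha; [exact Halpha |].
  intros r _. rewrite hmul_hinv_origin.
  apply (dil_hinv_mul_in_Balpha alpha (tan th)); try lra; try nra.
Qed.
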